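(* If a choice probability function $q_1$ is QRUM-rationalizable, then it is APT-rationalizable (viewed as the function $q_1(p_1,y):=q_1(p_1)$ of price and income).
   Context: Two goods: good 0 with price $0$ and good 1 with price $p_1\ge0$; all consumers have common income $y>0$, choose one good and spend the remainder on a numeraire. The set of incomes and prices considered is such that prices are small relative to income (the paper writes $p_1\ll y$); in particular $0\le p_1\le y$, and the prices $p_L,p_H$ below lie in $[0,y]$ for every income $y$ considered. QRUM: $q_1$ (a function of price only) is QRUM-rationalizable if there exist a random variable $\eta$ with distribution $H$ and functions $V_0,V_1$, $\beta>0$ (utilities $U_0(y,\eta)=V_0(\eta)+\beta(\eta)y$, $U_1(y-p_1,\eta)=V_1(\eta)+\beta(\eta)(y-p_1)$) such that $q_1(p_1)=\int\mathbb{1}\{V_0(\eta)\le V_1(\eta)-\beta(\eta)p_1\}\,dH(\eta)$ for all $p_1$, where (i) for every $p_1$, $\int\mathbb{1}\{V_0(\eta)=V_1(\eta)-\beta(\eta)p_1\}\,dH(\eta)=0$; (ii) there exist $p_L$ with $\lim_{p_1\searrow p_L}\Pr[V_0(\eta)\le V_1(\eta)-\beta(\eta)p_1]=1$ and $p_H$ with $\lim_{p_1\nearrow p_H}\Pr[V_0(\eta)\le V_1(\eta)-\beta(\eta)p_1]=0$. APT: a function $q_1(p_1,y)$ is APT-rationalizable if there exist $U_0:(0,\infty)\to[0,\infty)$ non-decreasing, $U_1:[0,\infty)\to[0,\infty)$ continuous and strictly increasing, with: for every income $y$ there is $\bar p_1\in[0,y]$ with $U_0(y)\ge U_1(y-\bar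 p_1)$; and a CDF $G$ with $G(0)=0$, such that $q_{1}(p_{1},y)=\mathbb{1}\{U_{0}(y)<U_{1}(y-p_{1})\}\,(1-G(p_{1}))$ for all incomes $y$ and prices $p_1\in[0,y]$ considered. *)

From HB Require Import structures.
From mathcomp Require Import all_boot all_order all_algebra.
From mathcomp Require Import all_classical all_reals all_analysis.
Set Implicit Arguments. Unset Strict Implicit. Unset Printing Implicit Defensive.
Import Order.TTheory GRing.Theory Num.Theory.
Import numFieldNormedType.Exports.
Local Open Scope classical_set_scope.
Local Open Scope ring_scope.

Definition is_CDF {R : realType} (G : R -> R) : Prop :=
  [/\ {homo G : x y / x <= y},
      (forall a : R, G x @[x --> a^'+] --> G a),
      G x @[x --> -oo] --> (0 : R)
    & G x @[x --> +oo] --> (1 : R)].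

Definition qrum_prob {d} {T : measurableType d} {R : realType}
  (P : probability T R) (V0 V1 beta : T -> R) (p : R) : \bar R :=
  P [set e | V0 e <= V1 e - beta e * p].

(* QRUM-rationalizability of q1 : price -> probability (prices p >= 0),
   with the thresholds pL, pH of condition (ii) exposed. *)
Definition QRUM_rationalizable_with {R : realType} (q1 : R -> R) (pL pH : R)
  : Prop :=
  exists (d : measure_display) (T : measurableType d) (P : probability T R)
         (V0 V1 beta : T -> R),
    [/\ measurable_fun setT V0, measurable_fun setT V1,
        measurable_fun setT beta & (forall e, 0 < beta e)] /\
    [/\
        (forall p, 0 <= p -> (q1 p)%:E = qrum_prob P V0 V1 beta p),
        (forall p, 0 <= p -> P [set e | V0 e = V1 e - beta e * p] = 0%E),
        qrum_prob P V0 V1 beta p @[p --> pL^'+] --> 1%E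
      & qrum_prob P V0 V1 beta p @[p --> pH^'-] --> 0%E].

Definition APT_rationalizable {R : realType} (Y : set R) (q : R -> R -> R)
  : Prop :=
  exists (U0 U1 G : R -> R),
    [/\ (forall y, 0 < y -> 0 <= U0 y),
        (forall x y, 0 < x -> x <= y -> U0 x <= U0 y),
        (forall x, 0 <= x -> 0 <= U1 x),
        {within `[0, +oo[, continuous U1}
      & (forall x y, 0 <= x -> x < y -> U1 x < U1 y)] /\
    [/\
        (forall y, Y y -> exists2 pbar, 0 <= pbar <= y & U1 (y - pbar) <= U0 y),
        is_CDF G, G 0 = 0
      & forall y p1, Y y -> 0 <= p1 <= y ->
          q p1 y = (if U0 y < U1 (y - p1) then 1 else 0) * (1 - G p1)].

From HB Require Import structures.
From mathcomp Require Import all_boot all_order all_algebra.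
From mathcomp Require Import all_classical all_reals all_analysis.
From mathcomp Require Import measurable_realfun.
Import Order.TTheory GRing.Theory Num.Theory.
Import numFieldNormedType.Exports.
Local Open Scope classical_set_scope.
Local Open Scope ring_scope.

(* A QRUM consumer e buys good 1 at price p exactly when p is at most her
   willingness to pay W e = (V1 e - V0 e) / beta e, so q1 p = P[W >= p].  As
   ties are null this is 1 - F p, with F the CDF of W.  Condition (ii) turns
   into F 0 = 0 (using pL >= 0) and F = 1 on [pH, +oo[.  Hence the APT model
   with G := F, U1 := id and U0 y := max (y - pH) 0, in which good 1 is
   preferred exactly when p < pH, reproduces q1. *)

Lemma measurable_inv (R : realType) : measurable_fun [set: R] GRing.inv.
Proof.
have closed0 : closed [set 0 : R] by exact: closed_eq.
rewrite -(setUv [set 0]); apply/measurable_funU => //; first exact: measurableC.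
split; first exact: measurable_fun_set1.
apply: open_continuous_measurable_fun; first exact: closed_openC.
by move=> x /set_mem /eqP; exact: inv_continuous.
Qed.

Lemma is_CDF_fine_cdf {d} {T : measurableType d} {R : realType}
    {P : probability T R} (X : {RV P >-> R}) :
  is_CDF (fine \o cdf X).
Proof.
have cdf_fin r : cdf X r \is a fin_num by exact: fin_num_measure.
split.
- by move=> r s rs; rewrite /= fine_le ?cdf_nondecreasing.
- by move=> a; apply: fine_cvg; rewrite fineK //; exact: cdf_right_continuous.
- exact/fine_cvg/cvg_cdfNy0.
- exact/fine_cvg/cvg_cdfy1.
Qed.

Lemma cdf_cst_gt d (T : measurableType d) (R : realType)
    (P : probability T R) (a r : R) :
  r < a -> cdf (cst a : {RV P >-> R}) r = 0%E.
Proof.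
move=> ra; rewrite /cdf /distribution /pushforward preimage_cst.
rewrite ifF ?measure0 //; apply/negbTE/negP.
by rewrite in_setE /= in_itv /= leNgt ra.
Qed.

Lemma APT_rationalizable_threshold {R : realType} {Y : set R}
    {q G : R -> R} {pH : R} :
  is_CDF G -> G 0 = 0 -> (forall y, Y y -> 0 <= pH <= y) ->
  (forall y p, Y y -> 0 <= p <= y ->
     q p = (if p < pH then 1 else 0) * (1 - G p)) ->
  APT_rationalizable Y (fun p _ => q p).
Proof.
move=> CDF_G G0 pH_Y qE.
exists (fun y => Num.max (y - pH) 0), id, G; split; split => //.
- by move=> y _; rewrite le_max lexx orbT.
- by move=> x y _ xy; rewrite ge_max !le_max lexx lerB ?orbT.
- by apply: continuous_subspaceT => x; exact: cvg_id.
- move=> y /pH_Y/andP[pH0 pHy]; exists pH; first by rewrite pH0.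
  by rewrite le_max lexx.
- move=> y p Yy p_0y; rewrite (qE y p Yy p_0y).
  have /andP[_ pHy] := pH_Y y Yy.
  have -> : Num.max (y - pH) 0 = y - pH by apply/max_idPl; rewrite subr_ge0.
  by rewrite ltrD2l ltrN2.
Qed.

Section willingness_to_pay.
Context {d} {T : measurableType d} {R : realType} (P : probability T R).
Context {V0 V1 beta : T -> R}.
Context (mV0 : measurable_fun setT V0) (mV1 : measurable_fun setT V1)
  (mbeta : measurable_fun setT beta) (beta_gt0 : forall e, 0 < beta e).

Definition wtp e := (V1 e - V0 e) / beta e.

Lemma measurable_wtp : measurable_fun setT wtp.
Proof.
apply: measurable_funM; first exact: measurable_funB.
exact: measurableT_comp (measurable_inv R) mbeta.
Qed.

Definition wtp_rv : {RV P >-> R} := mfun_Sub (mem_set measurable_wtp).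

Lemma qrum_le_wtp e p : (V0 e <= V1 e - beta e * p) = (p <= wtp e).
Proof. by rewrite /wtp ler_pdivlMr // mulrC lerBrDr addrC -lerBrDr. Qed.

Lemma qrum_tie_wtp p :
  [set e | V0 e = V1 e - beta e * p] = wtp_rv @^-1` [set p].
Proof.
apply/seteqP; split => e /=; rewrite /wtp.
  move=> ->; rewrite opprB addrC subrK.
  by rewrite mulrAC divff ?mul1r ?gt_eqF.
by move=> <-; rewrite mulrC divfK ?gt_eqF // opprB addrC subrK.
Qed.

Lemma qrum_set_wtp p :
  [set e | V0 e <= V1 e - beta e * p] = wtp_rv @^-1` `[p, +oo[.
Proof. by apply/seteqP; split => e /=; rewrite in_itv /= andbT qrum_le_wtp. Qed.

Lemma qrum_prob_ccdf_wtp p : P [set e | V0 e = V1 e - beta e * p] = 0%E ->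
  qrum_prob P V0 V1 beta p = ccdf wtp_rv p.
Proof.
rewrite qrum_tie_wtp => tie0.
rewrite /qrum_prob qrum_set_wtp -(@setU1itv _ _ _ p false) //.
rewrite preimage_setU measureU //.
- by rewrite [X in X + _ = _](_ : _ = 0%E) ?add0e.
- exact: measurable_funPTI.
- by apply/seteqP; split => // e [/= ->]; rewrite in_itv /= ltxx.
Qed.

Lemma ccdf_wtp_le_qrum_prob p r : p <= r ->
  (ccdf wtp_rv r <= qrum_prob P V0 V1 beta p)%E.
Proof.
move=> pr; rewrite /qrum_prob qrum_set_wtp.
apply: (le_measure P); rewrite ?inE; [exact: measurable_funPTI..|].
by move=> x /=; rewrite !in_itv /= !andbT => /ltW; exact: le_trans.
Qed.

Lemma qrum_prob_le_ccdf_wtp p r : r < p ->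
  (qrum_prob P V0 V1 beta p <= ccdf wtp_rv r)%E.
Proof.
move=> rp; rewrite /qrum_prob qrum_set_wtp.
apply: (le_measure P); rewrite ?inE; [exact: measurable_funPTI..|].
by move=> x /=; rewrite !in_itv /= !andbT; exact: lt_le_trans.
Qed.

Lemma cdf_wtp0 {pL} : 0 <= pL ->
  qrum_prob P V0 V1 beta p @[p --> pL^'+] --> 1%E -> cdf wtp_rv 0 = 0%E.
Proof.
move=> pL0 q_pL; have ccdf1 : ccdf wtp_rv 0 = 1%E.
  apply/le_anti; rewrite probability_le1 //=; apply: cvge_le q_pL.
  apply: filterS (nbhs_right_gt pL) => p pLp.
  exact/qrum_prob_le_ccdf_wtp/(le_lt_trans pL0 pLp).
by rewrite cdf_1_ccdf ccdf1 subee.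
Qed.

Lemma cdf_wtp_eq1 {pH} :
  qrum_prob P V0 V1 beta p @[p --> pH^'-] --> 0%E ->
  forall p, pH <= p -> cdf wtp_rv p = 1%E.
Proof.
move=> q_pH p pHp; have ccdf0 : ccdf wtp_rv p = 0%E.
  apply/le_anti; rewrite measure_ge0 andbT.
  apply: le_trans (ccdf_nonincreasing _ pHp) _; apply: cvge_ge q_pH.
  apply: filterS (nbhs_left_lt pH) => r rpH.
  exact/ccdf_wtp_le_qrum_prob/ltW.
by rewrite cdf_1_ccdf ccdf0 sube0.
Qed.

End willingness_to_pay.

Theorem theorem3 (R : realType) (Y : set R) (q1 : R -> R) (pL pH : R) :
  (forall y, Y y -> 0 < y) ->
  (forall y, Y y -> 0 <= pL <= y /\ 0 <= pH <= y) ->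
  QRUM_rationalizable_with q1 pL pH ->
  APT_rationalizable Y (fun p1 y => q1 p1).
Proof.
move=> _ Yp [d [T [P [V0 [V1 [beta [[mV0 mV1 mbeta beta_gt0]]]]]]]].
move=> [q1E tie0 q_pL q_pH].
have [[? /Yp[/andP[pL0 _] /andP[pH0 _]]]|noY] := pselect (exists y, Y y);
  last first.
  (* Without incomes the sign of pL is unknown; any CDF vanishing at 0 fits. *)
  apply: (APT_rationalizable_threshold (pH := 0)
           (is_CDF_fine_cdf (cst 1 : {RV P >-> R}))).
  - by rewrite /= cdf_cst_gt ?ltr01.
  - by move=> y Yy; case: noY; exists y.
  - by move=> y p Yy; case: noY; exists y.
pose W := wtp_rv P mV0 mV1 mbeta.
have q1_cdf p : 0 <= p -> q1 p = 1 - fine (cdf W p).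
  move=> p0; apply/EFin_inj.
  rewrite q1E // (qrum_prob_ccdf_wtp P mV0 mV1 mbeta beta_gt0 p (tie0 p p0)).
  by rewrite ccdf_1_cdf EFinB fineK ?fin_num_measure.
apply: (APT_rationalizable_threshold (pH := pH) (is_CDF_fine_cdf W)).
- by rewrite /= (cdf_wtp0 P mV0 mV1 mbeta beta_gt0 pL0 q_pL).
- by move=> y /Yp[].
move=> y p _ /andP[p0 _]; rewrite q1_cdf //=.
case: ltP => [_|pHp]; first by rewrite mul1r.
by rewrite (cdf_wtp_eq1 P mV0 mV1 mbeta beta_gt0 q_pH) // subrr mul0r.
Qed.
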